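(* Let $m$ be an odd natural number and $\underline R_m=N_{D_2}^{D_{2m}}\underline{\mathbb Z}$. Then $\underline R_m(D_{2m}/D_{2m})$ is a free abelian group \[ \underline R_m(D_{2m}/D_{2m})\cong\mathbb Z\{[D_{2m}/D_{2k}]\mid k\text{ divides }m\}.\] Under the quotient map $\underline A^{D_{2m}}\to\underline R_m$, the image of $[D_{2m}/D_{2k}]$ is $[D_{2m}/D_{2k}]$ and the image of $[D_{2m}/\mu_k]$ is $2[D_{2m}/D_{2k}]$.
   Context: $D_{2m}=\langle\tau,\zeta_m\mid\tau^2=\zeta_m^m=(\tau\zeta_m)^2=1\rangle$, $D_2=\langle\tau\rangle$, $\mu_k=\langle\zeta_k\rangle$, $D_{2k}=\langle\tau,\zeta_k\rangle$ for $k\mid m$. $\underline{\mathbb Z}$ is the constant $D_2$-Mackey functor, and Mackey norms are $N_H^G\underline M=\underline\pi_0^GN_H^GH\underline M$; there is an isomorphism $N_{D_2}^{D_{2m}}\underline{\mathbb Z}\cong\underline A^{D_{2m}}/(2-[D_{2m}/\mu_m])$, the quotient of the Burnside Mackey functor by the congruence generated by $2-[D_{2m}/\mu_m]$, and the quotient map refers to this presentation. $[T]$ denotes the class of a finite $D_{2m}$-set $T$ in the Burnside ring $\underline A^{D_{2m}}(D_{2m}/D_{2m})$. *)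

From HB Require Import structures.
From mathcomp Require Import all_boot all_order all_algebra all_fingroup.
Set Implicit Arguments. Unset Strict Implicit. Unset Printing Implicit Defensive.
Import GRing.Theory.

(* Burnside ring A^G(G/G) of a finite group G, realised through the (injective)
   table-of-marks homomorphism: an element of A(G) is recorded by its marks,
   i.e. the function K |-> #|X^K| (for a virtual G-set X), ring operations
   being pointwise.  K ranges over all subsets of gT; the fixed points of a
   subset K are those of <<K>>, so this is harmless. *)

Section Burnside.
Variable gT : finGroupType.
Local Open Scope group_scope.

Definition mark (G H K : {set gT}) : int :=
  (#|[set C in lcosets H G | [forall k in K, (k *: C) == C]]|)%:Z.

Definition cls (G H : {set gT}) : {ffun {set gT} -> int} :=
  [ffun K => mark G H K].

Definition burnside (G : {set gT}) (a : {ffun {set gT} -> int}) : Prop :=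
  exists c : {set gT} -> int,
    (a = \sum_(H : {set gT} | group_set H && (H \subset G)) (cls G H *~ c H))%R.

Definition bmul (a b : {ffun {set gT} -> int}) : {ffun {set gT} -> int} :=
  [ffun K => (a K * b K)%R].

Definition cong_mod (G : {set gT}) (x a a' : {ffun {set gT} -> int}) : Prop :=
  exists b, burnside G b /\ (a = a' + bmul x b)%R.

End Burnside.

From HB Require Import structures.
From mathcomp Require Import all_boot all_order all_algebra all_fingroup all_solvable.
From mathcomp Require Import zify.
Set Implicit Arguments. Unset Strict Implicit. Unset Printing Implicit Defensive.
Import GRing.Theory.

(* Every subgroup of the dihedral group G of order 2m (m odd) is either a
   subgroup mu_k of the rotation group or, after conjugating a reflection to
   tau, a dihedral subgroup D_2k; since marks are conjugation invariant, the
   classes [G/mu_k] and [G/D_2k] span A(G).  Comparing marks gives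
   [G/mu_k] = 2 [G/D_2k] - x [G/D_2k] with x = 2 - [G/mu_m], so the [G/D_2k]
   span modulo (x).  They are independent modulo (x) because x has mark 0 on
   every mu_j, while the mark of [G/D_2k] at mu_j is |G : D_2k| if j | k and 0
   otherwise: the system is triangular along divisibility. *)

Section Marks.
Variable gT : finGroupType.
Local Open Scope group_scope.
Implicit Types (G H : {group gT}) (K : {set gT}).

Lemma lcoset_fixed H g K :
  [forall k in K, k *: (g *: H) == g *: H] = (K :^ g \subset H).
Proof.
apply/forall_inP/subsetP => [fixK y | sKgH k kK].
  rewrite mem_conjg => yK; have := fixK _ yK; rewrite -lcosetM => /eqP e.
  have : y ^ g^-1 * g \in g *: H by rewrite -e lcoset_refl.
  by rewrite mem_lcoset -conjgE conjgKV.
rewrite -lcosetM; apply/eqP/lcoset_eqP; rewrite mem_lcoset -conjgE.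
by apply: sKgH; rewrite memJ_conjg.
Qed.

Lemma markE (G : {set gT}) H K :
  mark G H K = Posz #|[set g *: H | g in [set g in G | K :^ g \subset H]]|.
Proof.
congr Posz; apply: eq_card => C; rewrite inE.
apply/andP/imsetP => [[/imsetP[g gG ->] fixK] | [g]].
  by exists g; rewrite ?inE ?gG -?lcoset_fixed -?lcosetE.
rewrite inE => /andP[gG sKgH] ->; rewrite lcoset_fixed sKgH.
by split => //; apply/imsetP; exists g; rewrite ?lcosetE.
Qed.

Lemma mark_uniform G H K (b : bool) :
  (forall g, g \in G -> (K :^ g \subset H) = b) -> mark G H K = Posz (b * #|G : H|).
Proof.
move=> hb; rewrite markE; congr Posz; case: b hb => hb; last first.
  have -> : [set g in G | K :^ g \subset H] = set0.
    by apply/setP => g; rewrite !inE; apply/negbTE/andP => -[/hb->].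
  by rewrite imset0 cards0.
have -> : [set g in G | K :^ g \subset H] = G.
  by apply/setP => g; rewrite inE; apply/andb_idr => /hb->.
rewrite mul1n -card_lcosets; apply: eq_card => C.
by apply/imsetP/imsetP => [][g gG ->]; exists g; rewrite ?lcosetE.
Qed.

Lemma markJ G H K w : w \in G -> mark G (H :^ w) K = mark G H K.
Proof.
move=> wG; rewrite (markE G (H :^ w)%G) markE; congr Posz.
rewrite -[RHS](card_imset _ (@rcoset_inj _ w)); apply: eq_card => C.
have memJ g : (g \in [set g in G | K :^ g \subset H :^ w]) =
              (g * w^-1 \in [set g in G | K :^ g \subset H]).
  by rewrite !inE groupMr ?groupV // conjsgM sub_conjgV.
have lcosetJ g : g *: (H :^ w) = (g * w^-1) *: H :* w.
  by rewrite conjsgE -lcosetM mulgA.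
apply/imsetP/imsetP => [[g gS ->] | [C0 /imsetP[h hS ->] ->]].
  exists ((g * w^-1) *: H); last by rewrite lcosetJ.
  by apply/imsetP; exists (g * w^-1); rewrite -?memJ.
by exists (h * w); rewrite ?memJ ?lcosetJ mulgK.
Qed.

Lemma mark_notsub G H K : ~~ (K \subset G) -> H \subset G -> mark G H K = 0%R.
Proof.
move=> nsKG sHG; rewrite (@mark_uniform _ _ _ false) // => g gG.
apply/negbTE; apply: contra nsKG => sKgH.
by rewrite -(conjGid (groupVr gG)) -sub_conjg (subset_trans sKgH sHG).
Qed.

Lemma normal_sub_conjg G H K g : H <| G -> g \in G -> (K :^ g \subset H) = (K \subset H).
Proof.
by case/andP=> _ nHG gG; rewrite sub_conjg; have /normP -> := subsetP nHG _ (groupVr gG).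
Qed.

Lemma mark_normal G H K : H <| G -> mark G H K = Posz ((K \subset H) * #|G : H|).
Proof. by move=> nsHG; apply: mark_uniform => g; apply: normal_sub_conjg. Qed.

Lemma mark_full G K : mark G G K = Posz (K \subset G).
Proof. by rewrite mark_normal ?normal_refl // indexgg muln1. Qed.

Lemma clsJ G H w : w \in G -> cls G (H :^ w) = cls G H.
Proof. by move=> wG; apply/ffunP => K; rewrite !ffunE markJ. Qed.

End Marks.

Section CongruenceModulo.
Variables (gT : finGroupType) (G : {set gT}) (x : {ffun {set gT} -> int}).
Implicit Types (a b : {ffun {set gT} -> int}) (n : int).
Local Open Scope ring_scope.

Lemma burnside0 : burnside G 0.
Proof. by exists (fun=> 0); rewrite big1 // => H _; rewrite mulr0z. Qed.

Lemma burnsideD a b : burnside G a -> burnside G b -> burnside G (a + b).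
Proof.
move=> [c1 ->] [c2 ->]; exists (fun H => c1 H + c2 H).
by rewrite -big_split; apply: eq_bigr => H _; rewrite mulrzDr.
Qed.

Lemma burnsideMz a n : burnside G a -> burnside G (a *~ n).
Proof.
move=> [c ->]; exists (fun H => c H * n).
by rewrite mulrz_suml; apply: eq_bigr => H _; rewrite mulrzA.
Qed.

Lemma burnside_cls (H : {group gT}) : (H \subset G)%g -> burnside G (cls G H).
Proof.
move=> sHG; exists (fun K => (K == H :> {set gT})%:Z).
rewrite (bigD1 (H : {set gT})) /=; last by rewrite groupP sHG.
rewrite eqxx mulr1z big1 ?addr0 // => K /andP[_ nKH].
by rewrite (negbTE nKH) mulr0z.
Qed.

Lemma cong_mod_refl a : cong_mod G x a a.
Proof.
by exists 0; split; [exact: burnside0 | apply/ffunP => K; rewrite !ffunE mulr0 addr0].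
Qed.

Lemma cong_modD a1 a2 b1 b2 :
  cong_mod G x a1 b1 -> cong_mod G x a2 b2 -> cong_mod G x (a1 + a2) (b1 + b2).
Proof.
move=> [c1 [Bc1 ->]] [c2 [Bc2 ->]]; exists (c1 + c2); split; first exact: burnsideD.
by rewrite addrACA; congr (_ + _); apply/ffunP => K; rewrite !ffunE mulrDr.
Qed.

Lemma cong_modMz a b n : cong_mod G x a b -> cong_mod G x (a *~ n) (b *~ n).
Proof.
move=> [c [Bc ->]]; exists (c *~ n); split; first exact: burnsideMz.
by rewrite mulrzDl; congr (_ + _); apply/ffunP => K; rewrite !(ffunE, ffunMzE) mulrzAr.
Qed.

Variables (I : eqType) (s : seq I) (f : I -> {ffun {set gT} -> int}).

Definition cong_span a := exists c : I -> int, cong_mod G x a (\sum_(i <- s) f i *~ c i).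

Lemma cong_span0 : cong_span 0.
Proof. by exists (fun=> 0); rewrite big1 => [|i _]; [exact: cong_mod_refl | rewrite mulr0z]. Qed.

Lemma cong_spanD a b : cong_span a -> cong_span b -> cong_span (a + b).
Proof.
move=> [c1 h1] [c2 h2]; exists (fun i => c1 i + c2 i).
under eq_bigr do rewrite mulrzDr; rewrite big_split; exact: cong_modD.
Qed.

Lemma cong_spanMz a n : cong_span a -> cong_span (a *~ n).
Proof.
move=> [c h]; exists (fun i => c i * n).
under eq_bigr do rewrite mulrzA; rewrite -mulrz_suml; exact: cong_modMz.
Qed.

Lemma cong_span_gen a i n : uniq s -> i \in s -> cong_mod G x a (f i *~ n) -> cong_span a.
Proof.
move=> s_uniq si h; exists (fun j => (j == i)%:Z * n).
rewrite (bigD1_seq i) //= eqxx mul1r big1 ?addr0 // => j /negbTE->.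
by rewrite mul0r mulr0z.
Qed.

Lemma burnside_cong_span :
  (forall H : {group gT}, (H \subset G)%g -> cong_span (cls G H)) ->
  forall a, burnside G a -> cong_span a.
Proof.
move=> span_cls a [c ->]; apply: big_ind => [||H /andP[gH sHG]].
- exact: cong_span0.
- exact: cong_spanD.
- exact/cong_spanMz/(span_cls (Group gH)).
Qed.

End CongruenceModulo.

Lemma divisor_sums_eq0 (V : zmodType) m (f : nat -> V) : (0 < m)%N ->
  (forall j, j %| m -> (\sum_(k <- divisors m | (j %| k)%N) f k)%R = 0%R) ->
  forall j, j %| m -> f j = 0%R.
Proof.
move=> m_gt0 hsum j; have [n] := ubnP (m - j); elim: n j => // n IH j lt_mj jm.
have := hsum j jm; rewrite (big_rem j) -?dvdn_divisors // dvdnn big1_seq /=.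
  by rewrite addr0.
move=> k /andP[jk]; rewrite mem_rem_uniq ?divisors_uniq // inE => /andP[nkj].
rewrite -dvdn_divisors // => km; apply: (IH _ _ km).
have := dvdn_leq (dvdn_gt0 m_gt0 km) jk; have := dvdn_leq m_gt0 km.
by move: nkj; rewrite neq_ltn; case/orP => ? ? ?; lia.
Qed.

Section Dihedral.
Variables (gT : finGroupType) (G : {group gT}) (tau zeta : gT) (m : nat).
Hypotheses (m_odd : odd m) (defG : G :=: <<[set tau; zeta]>>%g)
  (tau2 : (tau ^+ 2 = 1)%g) (zeta_m : (zeta ^+ m = 1)%g)
  (tau_zeta2 : ((tau * zeta) ^+ 2 = 1)%g) (oG : #|G| = (2 * m)%N).
Local Open Scope group_scope.

Local Notation mu k := <[zeta ^+ (m %/ k)]>.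
Local Notation D k := <<[set tau; zeta ^+ (m %/ k)]>>.

Lemma m_gt0 : (0 < m)%N. Proof. by case: m m_odd. Qed.

Lemma tauV : tau^-1 = tau.
Proof. by rewrite -[LHS]mul1g -tau2 expgS expg1 mulgK. Qed.

Lemma conjg_tau_cycle z : z \in <[zeta]> -> z ^ tau = z^-1.
Proof.
have zetaJtau : zeta ^ tau = zeta^-1.
  rewrite conjgE tauV mulgA; apply/eqP; rewrite eq_mulgV1 invgK.
  by rewrite -tau_zeta2 expgS expg1 !mulgA.
by case/cycleP=> i ->; rewrite conjXg zetaJtau expgVn.
Qed.

Lemma tau_in : tau \in G. Proof. by rewrite defG mem_gen // !inE eqxx. Qed.
Lemma zeta_in : zeta \in G. Proof. by rewrite defG mem_gen // !inE eqxx orbT. Qed.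
Lemma cycle_zeta_sub : <[zeta]> \subset G. Proof. by rewrite cycle_subG zeta_in. Qed.

Lemma normal_subcycle (H : {group gT}) : H \subset <[zeta]> -> H <| G.
Proof.
move=> sHZ; have tauN : tau \in 'N(H).
  rewrite inE sub_conjg tauV; apply/subsetP => y yH.
  by rewrite mem_conjg tauV conjg_tau_cycle ?groupV //; apply: (subsetP sHZ).
have zetaN : zeta \in 'N(H).
  exact: (subsetP (sub_abelian_norm (cycle_abelian zeta) sHZ)) _ (cycle_id zeta).
by rewrite /normal (subset_trans sHZ cycle_zeta_sub) defG gen_subG subUset !sub1set tauN.
Qed.

Lemma gen_tau_zetaX e : <<[set tau; zeta ^+ e]>> = <[zeta ^+ e]> * <[tau]>.
Proof.
have nZT : <[tau]> \subset 'N(<[zeta ^+ e]>).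
  case/andP: (normal_subcycle (cycleX zeta e)) => _ /subsetP nZ.
  by rewrite cycle_subG nZ ?tau_in.
rewrite -(norm_joinEr nZT); apply/eqP; rewrite eqEsubset join_subG !sub1set.
rewrite (subsetP (joing_subr _ _)) ?(subsetP (joing_subl _ _)) ?cycle_id //=.
by rewrite join_subG !cycle_subG !mem_gen // !inE eqxx ?orbT.
Qed.

Lemma G_mul : G :=: <[zeta]> * <[tau]>.
Proof. by rewrite defG -[zeta]expg1 gen_tau_zetaX. Qed.

Lemma dihedral_orders : [/\ #[zeta] = m, #[tau] = 2 & <[zeta]> :&: <[tau]> = 1].
Proof.
have := mul_cardG <[zeta]> <[tau]>; rewrite -G_mul oG -!orderE.
set c := #|_ :&: _| => eq_card.
have c_gt0 : (0 < c)%N by apply/card_gt0P; exists 1; rewrite group1.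
have le_zm : (#[zeta] <= m)%N by apply: dvdn_leq m_gt0 _; rewrite order_dvdn zeta_m.
have le_t2 : (#[tau] <= 2)%N by apply: dvdn_leq; rewrite ?order_dvdn ?tau2.
have := m_gt0 => m_gt0; have c1 : c = 1%N by nia.
split; try nia.
by apply/card1_trivg; rewrite -/c c1.
Qed.

Lemma order_zeta : #[zeta] = m. Proof. by case: dihedral_orders. Qed.
Lemma order_tau : #[tau] = 2. Proof. by case: dihedral_orders. Qed.
Lemma cycle_zeta_tauI : <[zeta]> :&: <[tau]> = 1. Proof. by case: dihedral_orders. Qed.

Lemma order_mu k : (k %| m)%N -> #[zeta ^+ (m %/ k)] = k.
Proof.
move=> km; rewrite orderXdiv order_zeta ?dvdn_div //.
by rewrite divnA // mulKn // m_gt0.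
Qed.

Lemma mu_sub_mu j k : (j %| m)%N -> (k %| m)%N -> (mu j \subset mu k) = (j %| k)%N.
Proof.
move=> jm km; apply/idP/idP => [sJK | /dvdnP[a def_k]].
  by have := cardSg sJK; rewrite -!orderE !order_mu.
have /dvdnP[b def_m] := km; have j_gt0 := dvdn_gt0 m_gt0 jm.
have aj_gt0 : (0 < a * j)%N by rewrite -def_k (dvdn_gt0 m_gt0 km).
have -> : (m %/ j = m %/ k * a)%N by rewrite def_m def_k (mulnK _ aj_gt0) mulnA mulnK.
by rewrite cycle_subG expgM groupX ?cycle_id.
Qed.

Lemma D_sub e : <<[set tau; zeta ^+ e]>> \subset G.
Proof. by rewrite gen_subG subUset !sub1set tau_in groupX // zeta_in. Qed.

Lemma D_cap_cycle e : <<[set tau; zeta ^+ e]>> :&: <[zeta]> = <[zeta ^+ e]>.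
Proof. by rewrite gen_tau_zetaX -group_modl ?cycleX // setIC cycle_zeta_tauI mulg1. Qed.

Lemma card_D k : (k %| m)%N -> #|D k| = (k * 2)%N.
Proof.
move=> km; have := mul_cardG (mu k) <[tau]>.
have -> : mu k :&: <[tau]> = 1 by apply/trivgP; rewrite -cycle_zeta_tauI setSI ?cycleX.
by rewrite -gen_tau_zetaX -!orderE order_mu // order_tau cards1 muln1.
Qed.

Lemma index_cycle : #|G : <[zeta]>| = 2.
Proof. by rewrite -divgS ?cycle_zeta_sub // oG -orderE order_zeta mulnK // m_gt0. Qed.

Lemma mu_sub_D e : <[zeta ^+ e]> \subset <<[set tau; zeta ^+ e]>>.
Proof. by rewrite cycle_subG mem_gen // !inE eqxx orbT. Qed.

Lemma index_mu k : (k %| m)%N -> #|G : mu k| = (2 * #|G : D k|)%N.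
Proof.
move=> km; rewrite -(Lagrange_index (D_sub _) (mu_sub_D _)) mulnC; congr (_ * _)%N.
by rewrite -divgS ?mu_sub_D // card_D // -orderE order_mu // mulKn // (dvdn_gt0 m_gt0 km).
Qed.

Lemma mark_D_subcycle e (K : {set gT}) : K \subset <[zeta]> ->
  mark G <<[set tau; zeta ^+ e]>> K =
  Posz ((K \subset <[zeta ^+ e]>) * #|G : <<[set tau; zeta ^+ e]>>|).
Proof.
move=> sKZ; apply: mark_uniform => g gG.
have sKgZ : K :^ g \subset <[zeta]>.
  by rewrite (normal_sub_conjg _ (normal_subcycle (subxx _))).
have -> : (K :^ g \subset <<[set tau; zeta ^+ e]>>) =
          (K :^ g \subset <<[set tau; zeta ^+ e]>> :&: <[zeta]>) by rewrite subsetI sKgZ andbT.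
by rewrite D_cap_cycle (normal_sub_conjg _ (normal_subcycle (cycleX _ _))).
Qed.

Lemma subcycle_eq_mu (H : {group gT}) : H \subset <[zeta]> ->
  exists2 k, (k %| m)%N & H :=: mu k.
Proof.
move=> sHZ; have dvd_H : (#|H| %| #[zeta])%N by rewrite orderE cardSg.
exists #|H|; first by rewrite -order_zeta.
have : H \in [set L : {group gT} | L \subset <[zeta]> & #|L| == #|H|] by rewrite inE sHZ eqxx.
rewrite cycle_sub_group // order_zeta => /set1P def_H.
exact: (congr1 (@gval _) def_H).
Qed.

Lemma reflection_conj z : z \in <[zeta]> -> (z * tau) ^ (z ^+ (m.+1)./2) = tau.
Proof.
move=> zZ; set w := z ^+ _; have wZ : w \in <[zeta]> by rewrite groupX.
have tauJw : tau ^ w = (w ^+ 2)^-1 * tau.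
  have tau_w : tau * w = w^-1 * tau.
    by rewrite -(conjg_tau_cycle wZ) conjgE tauV -!mulgA -{3}tauV mulVg mulg1.
  by rewrite conjgE tau_w mulgA expgS expg1 invMg.
have zJw : z ^ w = z by rewrite /conjg (commuteX _ (commute_refl z)) mulKg.
have w2 : w ^+ 2 = z.
  have zm : z ^+ m = 1 by case/cycleP: zZ => i ->; rewrite expgAC zeta_m expg1n.
  have half : ((m.+1)./2).*2 = m.+1 by rewrite -[in RHS](odd_double_half m.+1) /= m_odd.
  by rewrite -expgM muln2 half expgSr zm mul1g.
by rewrite conjMg tauJw zJw w2 mulKVg.
Qed.

Lemma exists_conjg_tau (H : {group gT}) : H \subset G -> ~~ (H \subset <[zeta]>) ->
  exists2 w, w \in G & tau \in H :^ w.
Proof.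
move=> sHG /subsetPn[h hH hZ].
have /mulsgP[z _ zZ /cycleP[i ->] def_h] : h \in <[zeta]> * <[tau]>.
  by rewrite -G_mul (subsetP sHG).
rewrite -(expg_mod _ tau2) modn2 in def_h.
case: (odd i) def_h => [|] def_h; last by rewrite def_h mulg1 zZ in hZ.
exists (z ^+ (m.+1)./2); first by rewrite groupX // (subsetP cycle_zeta_sub).
by rewrite -(reflection_conj zZ) -[tau]expg1 -def_h memJ_conjg.
Qed.

Lemma subgroup_tau_eq_D (L : {group gT}) : L \subset G -> tau \in L ->
  exists2 k, (k %| m)%N & L :=: D k.
Proof.
move=> sLG tauL; have [k km def_LZ] := subcycle_eq_mu (subsetIr L <[zeta]>).
exists k => //; rewrite gen_tau_zetaX -def_LZ group_modr ?cycle_subG // -G_mul.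
exact/esym/setIidPl.
Qed.

Lemma cls_subgroup (H : {group gT}) : H \subset G ->
  exists2 k, (k %| m)%N & cls G H = cls G (mu k) \/ cls G H = cls G (D k).
Proof.
move=> sHG; have [sHZ | nsHZ] := boolP (H \subset <[zeta]>).
  by have [k km ->] := subcycle_eq_mu sHZ; exists k; [|left].
have [w wG tauHw] := exists_conjg_tau sHG nsHZ.
have sHwG : H :^ w \subset G by rewrite -(conjGid wG) conjSg.
have [k km def_Hw] := subgroup_tau_eq_D sHwG tauHw.
by exists k => //; right; rewrite -(clsJ H wG) /= def_Hw.
Qed.

Lemma mark_mu e (K : {set gT}) :
  mark G <[zeta ^+ e]> K = Posz ((K \subset <[zeta ^+ e]>) * #|G : <[zeta ^+ e]>|).
Proof. exact: mark_normal (normal_subcycle (cycleX _ _)). Qed.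

Local Notation x := (cls G G *+ 2 - cls G <[zeta]>)%R.

Lemma x_subcycle (K : {set gT}) : K \subset <[zeta]> -> x K = 0%R.
Proof.
move=> sKZ; rewrite !ffunE mark_full (mark_normal _ (normal_subcycle (subxx _))).
by rewrite index_cycle sKZ (subset_trans sKZ cycle_zeta_sub) subrr.
Qed.

Lemma cong_mu_D k : (k %| m)%N -> cong_mod G x (cls G (mu k)) (cls G (D k) *+ 2)%R.
Proof.
move=> km; exists (- cls G (D k))%R; split.
  by rewrite -mulrN1z; apply/burnsideMz/burnside_cls/D_sub.
apply/ffunP => K; rewrite !(ffunE, ffunMnE) mark_full mark_mu index_mu //.
rewrite (mark_normal _ (normal_subcycle (subxx _))) index_cycle.
have [sKZ | nsKZ] := boolP (K \subset <[zeta]>).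
  rewrite mark_D_subcycle // (subset_trans sKZ cycle_zeta_sub).
  by case: (K \subset mu k); lia.
have -> : (K \subset mu k) = false.
  by apply: contraNF nsKZ => /subset_trans->; rewrite ?cycleX.
have [_ | nsKG] := boolP (K \subset G); first by lia.
by rewrite mark_notsub ?D_sub //; lia.
Qed.

Lemma D_cong_indep (c : nat -> int) :
  cong_mod G x (\sum_(k <- divisors m) cls G (D k) *~ c k)%R 0%R ->
  forall k, (k %| m)%N -> c k = 0%R.
Proof.
move=> [b [_ def_sum]] k km.
suff /eqP : (c k * Posz #|G : D k| = 0)%R.
  by rewrite mulf_eq0 eqz_nat eqn0Ngt indexg_gt0 orbF => /eqP.
apply: (divisor_sums_eq0 (f := fun k => c k * Posz #|G : D k|)%R m_gt0) km => j jm.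
move/ffunP/(_ (mu j)): def_sum.
rewrite sum_ffunE add0r [bmul _ _ _]ffunE x_subcycle ?cycleX // mul0r => sum0.
rewrite big_mkcond; apply: etrans sum0; apply: eq_big_seq => i.
rewrite -dvdn_divisors ?m_gt0 // => im.
rewrite ffunMzE ffunE mark_D_subcycle ?cycleX // mu_sub_mu //.
by case: (j %| i)%N; rewrite ?mul1n ?mul0n ?mul0rz // mulrzz mulrC.
Qed.

Lemma cong_span_D a :
  burnside G a -> cong_span G x (divisors m) (fun k => cls G (D k)) a.
Proof.
apply: burnside_cong_span => H sHG; have [k km [->|->]] := cls_subgroup sHG.
- have km' : k \in divisors m by rewrite -dvdn_divisors ?m_gt0.
  exact: (cong_span_gen (n := 2) (divisors_uniq m) km' (cong_mu_D km)).
- have km' : k \in divisors m by rewrite -dvdn_divisors ?m_gt0.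
  apply: (cong_span_gen (n := 1) (divisors_uniq m) km').
  by rewrite mulr1z; apply: cong_mod_refl.
Qed.

End Dihedral.

Theorem corollary8p20 (gT : finGroupType) (G : {group gT}) (tau zeta : gT) (m : nat)
  (Hodd : odd m)
  (HG : G :=: <<[set tau; zeta]>>%g)
  (Htau : (tau ^+ 2 = 1)%g) (Hzeta : (zeta ^+ m = 1)%g)
  (Htz : ((tau * zeta) ^+ 2 = 1)%g)
  (Hord : #|G| = (2 * m)%N) :
  let D (k : nat) : {set gT} := <<[set tau; zeta ^+ (m %/ k)]>>%g in
  let mu (k : nat) : {set gT} := <[zeta ^+ (m %/ k)]>%g in
  let x := (cls G G *+ 2 - cls G (mu m))%R in
  (* spanning: every element of A(G) is congruent mod (x) to a Z-combination of the [G/D_2k] *)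
  (forall a, burnside G a ->
     exists c : nat -> int,
       cong_mod G x a (\sum_(k <- divisors m) (cls G (D k) *~ c k))%R) /\
  (* linear independence of the images of the [G/D_2k] in A(G)/(x) *)
  (forall c : nat -> int,
     cong_mod G x (\sum_(k <- divisors m) (cls G (D k) *~ c k))%R 0%R ->
     forall k, (k %| m)%N -> c k = 0%R) /\
  (* the image of [G/mu_k] is 2 [G/D_2k] *)
  (forall k, (k %| m)%N -> cong_mod G x (cls G (mu k)) (cls G (D k) *+ 2)%R).
Proof.
move=> D mu x; rewrite /x /mu divnn (m_gt0 Hodd) expg1.
split; first exact: (cong_span_D Hodd HG Htau Hzeta Htz Hord).
split; first exact: (D_cong_indep Hodd HG Htau Hzeta Htz Hord).
exact: (cong_mu_D Hodd HG Htau Hzeta Htz Hord).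
Qed.
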